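(* Let $a,b>1$ be such that $\log_b(a)\in\mathbb{Q}$, and write $\log_b(a)=q/p$ with $p,q$ relatively prime positive integers. Then, as operators from $L^2(\mathbb{R}_+)$ to $L^2(\mathbb{R})$, for all $s,m\in\mathbb{Z}$, \[ D_\varphi D_{a^{sq}} = T_{-sp} D_\varphi \qquad\text{and}\qquad D_\varphi M_{\gamma_m} = e^{2\pi i m/(b-1)}\, M_{m} D_\varphi . \]
   Context: For $b>1$ and $m\in\mathbb{Z}$, $\gamma_m:\mathbb{R}_+\to\mathbb{C}$ is the function satisfying $\gamma_m(bx)=\gamma_m(x)$ for all $x>0$ and $\gamma_m(x)=e^{2\pi i m x/(b-1)}$ for $x\in[1,b)$. For a bounded function $\eta$, $M_\eta$ denotes multiplication by $\eta$ (on $L^2(\mathbb{R}_+)$ or $L^2(\mathbb{R})$); for a real number $c$, $M_c$ on $L^2(\mathbb{R})$ is multiplication by $x\mapsto e^{2\pi i c x}$. For $a>0$, $D_a f(x)=a^{1/2}f(ax)$ (on $L^2(\mathbb{R}_+)$ or $L^2(\mathbb{R})$), and for $c\in\mathbb{R}$, $T_c f(x)=f(x-c)$ on $L^2(\mathbb{R})$. The function $\varphi:\mathbb{R}\to\mathbb{R}_+$ is defined by $\varphi(x)=b^k\big((b-1)x+(1-(b-1)k)\big)$ for $x\in[k,k+1)$, $k\in\mathbb{Z}$ (the piecewise linear interpolant of the points $(k,b^k)$), and $D_\varphi:L^2(\mathbb{R}_+)\to L^2(\mathbb{R})$ is the (unitary) operator $(D_\varphi h)(x)=\sqrt{\varphi'(x)}\,h(\varphi(x))$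 for a.e. $x\in\mathbb{R}$. *)

From mathcomp Require Import all_boot all_algebra.
From mathcomp Require Export complex.
From mathcomp Require Export all_classical all_reals all_analysis.
Import GRing.Theory Num.Theory.
Set Implicit Arguments.
Unset Strict Implicit.
Local Open Scope ring_scope.
Local Open Scope complex_scope.

Section Defs.
Variable R : realType.

Definition expi (t : R) : R[i] := (cos t +i* sin t).

Definition echar (c x : R) : R[i] := expi (2 * pi * c * x).

(* gamma_m : R_+ -> C, b-dilation invariant, equal to e^{2 pi i m x/(b-1)} on [1,b).
   For x > 0 let k = floor(log_b x), so that b^k <= x < b^(k+1) and x / b^k in [1,b). *)
Definition gamma_ (b : R) (m : int) (x : R) : R[i] :=
  let k : int := Num.floor (ln x / ln b) in
  expi (2 * pi * m%:~R * (x / b ^ k) / (b - 1)).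

(* piecewise linear interpolant of the points (k, b^k) *)
Definition phi (b : R) (x : R) : R :=
  let k : int := Num.floor x in
  b ^ k * ((b - 1) * x + (1 - (b - 1) * k%:~R)).

Definition Dphi (b : R) (h : R -> R[i]) (x : R) : R[i] :=
  (Num.sqrt (derive1 (phi b) x))%:C * h (phi b x).

Definition Dil (a : R) (f : R -> R[i]) (x : R) : R[i] :=
  (Num.sqrt a)%:C * f (a * x).

Definition Tr (c : R) (f : R -> R[i]) (x : R) : R[i] := f (x - c).

Definition Mfun (eta : R -> R[i]) (f : R -> R[i]) (x : R) : R[i] := eta x * f x.

Definition Mc (c : R) (f : R -> R[i]) (x : R) : R[i] := echar c x * f x.

End Defs.

From mathcomp Require Import all_boot all_algebra complex.
From mathcomp Require Import all_classical all_reals all_analysis.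
From mathcomp Require Import ring lra.
Import order.Order.TTheory GRing.Theory Num.Theory numFieldNormedType.Exports.
Local Open Scope ring_scope.
Local Open Scope complex_scope.

(** On [[k, k+1)] the map [phi b] is affine with slope [b^k (b - 1)], so
    [phi b (x + n) = b^n phi b x] and [phi' (x + n) = b^n phi' x] away from the
    integers: [D_phi] turns the dilation by [b^n] into the translation by [-n].
    From [ln b / ln a = q / p] we get [a^q = b^p], so [D_(a^(sq))] is the dilation
    by [b^(sp)].  Moreover [phi b x / b^k = 1 + (b - 1)(x - k)] lies in [[1, b)],
    hence [gamma_m (phi b x) = e^(2 pi i m/(b-1)) e^(2 pi i m x)] for every [x]. *)

Lemma expiD (R : realType) (x y : R) : expi (x + y) = expi x * expi y.
Proof.
rewrite /expi cosD sinD; apply/eqP.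
by rewrite eq_complex /= (addrC (cos x * sin y)) !eqxx.
Qed.

Lemma expiDz (R : realType) (x : R) (n : int) : expi (x + 2 * pi * n%:~R) = expi x.
Proof.
have expiDn (y : R) (k : nat) : expi (y + 2 * pi * k%:R) = expi y.
  rewrite /expi mulr_natr mulr_natl.
  by rewrite (periodicn (@cosD2pi R)) (periodicn (@sinD2pi R)).
case: n => k; first by rewrite -pmulrn expiDn.
by rewrite NegzE mulrN -[in RHS](subrK (2 * pi * k.+1%:R) x) expiDn.
Qed.

Lemma lnXz (R : realType) (b : R) (k : int) : 0 < b -> ln (b ^ k) = k%:~R * ln b.
Proof.
move=> b_gt0; case: k => n; first by rewrite -exprnP lnXn // mulr_natl.
rewrite NegzE /= lnV ?lnXn ?posrE ?exprn_gt0 //.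
by rewrite mulNr mulr_natl.
Qed.

Lemma expr_eq_of_ln_ratio (R : realType) (a b : R) (p q : nat) :
  0 < a -> a != 1 -> 0 < b -> (0 < p)%N ->
  ln b / ln a = q%:R / p%:R -> a ^+ q = b ^+ p.
Proof.
move=> a_gt0 a_neq1 b_gt0 p_gt0 log_ab.
have lna_neq0 : ln a != 0 by rewrite ln_eq0.
have p_neq0 : p%:R != 0 :> R by rewrite pnatr_eq0 -lt0n.
have lnbE : ln b = q%:R / p%:R * ln a by rewrite -log_ab mulfVK.
apply: ln_inj; rewrite ?posrE ?exprn_gt0 // !lnXn // lnbE.
by rewrite -mulrnAl -mulr_natr mulfVK // mulr_natl.
Qed.

Lemma ae_off_int (R : realType) (P : R -> Prop) :
  (forall x, (forall k : int, x != k%:~R) -> P x) ->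
  {ae lebesgue_measure, forall x, P x}.
Proof.
move=> P_off_int; set Z := range (fun k : int => k%:~R : R).
have Z_countable : countable Z.
  by apply: card_le_trans (card_image_le _ _) _; exact: countableP.
exists Z; split.
- by apply: countable_measurable Z_countable => t; exact: measurable_set1.
- exact: countable_lebesgue_measure0.
move=> x /= NPx; apply: contrapT => x_notin_Z; apply: NPx; apply: P_off_int.
by move=> k; apply/eqP => xk; apply: x_notin_Z; exists k.
Qed.

Section Phi.
Variable R : realType.
Implicit Types (b x : R) (n : int).

Lemma phi_floor b x :
  phi b x = b ^ Num.floor x * (1 + (b - 1) * (x - (Num.floor x)%:~R)).
Proof. by rewrite /phi; congr (_ * _); ring. Qed.

Lemma phiDz b x n : b != 0 -> phi b (x + n%:~R) = b ^ n * phi b x.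
Proof.
move=> b_neq0; rewrite /phi floorDrz ?intr_int // intrKfloor expfzDr // rmorphD /=.
ring.
Qed.

Lemma derive1_phi b x : (forall k : int, x != k%:~R) ->
  derive1 (phi b) x = b ^ Num.floor x * (b - 1).
Proof.
move=> x_off_int; set k := Num.floor x.
have k_lt_x : k%:~R < x by rewrite lt_neqAle floor_le andbT eq_sym x_off_int.
have x_lt_k1 : x < (k + 1)%:~R by exact: floorD1_gt.
have phi_affine : \forall y \near x,
    phi b y = b ^ k * (b - 1) * y + b ^ k * (1 - (b - 1) * k%:~R).
  near=> y.
  have : y \in `]k%:~R, (k + 1)%:~R[.
    by near: y; apply: near_in_itvoo; rewrite in_itv /= k_lt_x x_lt_k1.
  rewrite in_itv /= => /andP[k_lt_y y_lt_k1].
  rewrite /phi (_ : Num.floor y = k); last by apply: floor_def; rewrite ltW.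
  by rewrite mulrDr mulrA.
rewrite derive1E (near_eq_derive _ phi_affine).
have affine_derive : is_derive x 1
    (fun y => b ^ k * (b - 1) * y + b ^ k * (1 - (b - 1) * k%:~R)) (b ^ k * (b - 1)).
  by apply: is_derive_eq; rewrite addr0 -[RHS]mulr1.
by rewrite derive_val.
Unshelve. all: by end_near.
Qed.

Lemma phi_floor_factor_itv b x : 1 < b ->
  1 <= 1 + (b - 1) * (x - (Num.floor x)%:~R) < b.
Proof.
move=> b_gt1; set f := x - (Num.floor x)%:~R.
have f_ge0 : 0 <= f by rewrite subr_ge0 floor_le.
have f_lt1 : f < 1 by rewrite ltrBlDl -[1]/(1%:~R) -rmorphD floorD1_gt.
apply/andP; split; nra.
Qed.

Lemma floor_logb_phi b x : 1 < b -> Num.floor (ln (phi b x) / ln b) = Num.floor x.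
Proof.
move=> b_gt1; have b_gt0 : 0 < b by lra.
have lnb_gt0 : 0 < ln b by rewrite ln_gt0.
have /andP[t_ge1 t_ltb] := phi_floor_factor_itv b x b_gt1.
rewrite phi_floor lnM ?posrE ?exprz_gt0 //; last by lra.
rewrite lnXz // mulrDl mulfK ?gt_eqF //.
apply: floor_def; rewrite lerDl rmorphD /= ltrD2l divr_ge0 ?ln_ge0 ?(ltW b_gt1) //=.
by rewrite rmorph1 ltr_pdivrMr // mul1r ltr_ln ?posrE // (lt_le_trans ltr01 t_ge1).
Qed.

Lemma gamma_phi b x (m : int) : 1 < b ->
  gamma_ b m (phi b x) = expi (2 * pi * m%:~R / (b - 1)) * echar m%:~R x.
Proof.
move=> b_gt1; set k := Num.floor x.
have bk_gt0 : 0 < b ^ k by rewrite exprz_gt0 //; lra.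
rewrite /gamma_ floor_logb_phi // phi_floor -/k [b ^ k * _]mulrC mulfK ?gt_eqF //.
rewrite /echar -expiD -[in RHS](@expiDz _ _ (- (m * k))).
by congr expi; rewrite rmorphN rmorphM /=; field; lra.
Qed.

Lemma Dphi_Dil_bpow b n (h : R -> R[i]) x : 1 < b -> (forall k : int, x != k%:~R) ->
  Dphi b (Dil (b ^ n) h) x = Tr (- n%:~R) (Dphi b h) x.
Proof.
move=> b_gt1 x_off_int; have b_gt0 : 0 < b by lra.
have xn_off_int k : x + n%:~R != k%:~R.
  by apply: contra (x_off_int (k - n)); rewrite rmorphB /= => /eqP <-; rewrite addrK.
rewrite /Dphi /Dil /Tr opprK !derive1_phi // floorDrz ?intr_int // intrKfloor.
rewrite phiDz ?gt_eqF // expfzDr ?gt_eqF // mulrA -rmorphM -sqrtrM; last first.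
  by rewrite mulr_ge0 ?exprz_ge0 ?ltW // subr_gt0.
by rewrite mulrAC.
Qed.

Lemma Dphi_Mgamma b (m : int) (h : R -> R[i]) x : 1 < b ->
  Dphi b (Mfun (gamma_ b m) h) x
  = expi (2 * pi * m%:~R / (b - 1)) * Mc m%:~R (Dphi b h) x.
Proof.
move=> b_gt1; rewrite /Dphi /Mfun /Mc gamma_phi //.
by rewrite -!mulrA [LHS]mulrCA; congr (_ * _); exact: mulrCA.
Qed.

End Phi.

Theorem lemma2p1 (R : realType) (a b : R) (p q : nat) :
  1 < a -> 1 < b -> (0 < p)%N -> (0 < q)%N -> coprime p q ->
  ln b / ln a = q%:R / p%:R ->
  forall (s m : int) (h : R -> R[i]),
    {ae (@lebesgue_measure R), forall x : R,
       Dphi b (Dil (a ^ (s * q%:Z)) h) x = Tr (- (s * p%:Z)%:~R) (Dphi b h) x} /\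
    {ae (@lebesgue_measure R), forall x : R,
       Dphi b (Mfun (gamma_ b m) h) x
       = expi (2 * pi * m%:~R / (b - 1)) * Mc m%:~R (Dphi b h) x}.
Proof.
move=> a_gt1 b_gt1 p_gt0 _ _ log_ab s m h.
have aq_bp : a ^+ q = b ^+ p.
  by apply: expr_eq_of_ln_ratio log_ab; rewrite ?gt_eqF //; lra.
have -> : a ^ (s * q%:Z) = b ^ (s * p%:Z).
  by rewrite !(mulrC s) -!exprz_exp -!exprnP aq_bp.
split; last by apply: aeW => x; exact: Dphi_Mgamma.
by apply: ae_off_int => x x_off_int; exact: Dphi_Dil_bpow.
Qed.
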